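(* Let $A,B,C>0$ and $q>1$, and let $f(t)=At-\frac Bt-Ct^q$ and $g(t)=At^2+B-Cqt^{q+1}$ for $t\in(0,+\infty)$. Then there exist $\bar t,t^-,t^+$ such that (i) $0<t^+<\bar t<t^-$ and $f(t^+)=f(t^-)=0$; (ii) $f'(t^+)>0$ and $f'(t^-)<0$; (iii) $g(t)>0$ on $(0,\bar t)$ and $g(t)<0$ on $(\bar t,+\infty)$, if and only if $$\frac{(q-1)^{\frac{q-1}2}}{(q+1)^{\frac{q+1}2}}\cdot\frac{A^{\frac{q+1}2}}{B^{\frac{q-1}2}}>\frac C2.$$ *)

From Stdlib Require Import Reals.
From Coquelicot Require Import Coquelicot.
Open Scope R_scope.

Definition f_fun (A B C q : R) (t : R) : R := A * t - B / t - C * Rpower t q.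

Definition g_fun (A B C q : R) (t : R) : R :=
  A * t ^ 2 + B - C * q * Rpower t (q + 1).

Definition threshold_cond (A B C q : R) : Prop :=
  Rpower (q - 1) ((q - 1) / 2) / Rpower (q + 1) ((q + 1) / 2)
  * (Rpower A ((q + 1) / 2) / Rpower B ((q - 1) / 2)) > C / 2.

From Stdlib Require Import Reals Lra Ranalysis5.
From Coquelicot Require Import Coquelicot.
Open Scope R_scope.

(* For t > 0 the zeros of f are those of h(t) = t f(t) = A t^2 - B - C t^(q+1), which
   increases up to t_star, where t_star^(q-1) = 2A/(C(q+1)), decreases afterwards, and is
   negative near 0 and near +oo.  At a zero of f, eliminating B gives
   f'(t) = C(q+1)(t_star^(q-1) - t^(q-1)), so f' > 0 there exactly when t < t_star.
   Hence the configuration (i)-(ii) exists iff h(t_star) > 0, and raising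
   B(q+1) < t_star^2 A(q-1) to the power (q-1)/2 turns this into the threshold
   condition.  Finally g = t^2 f' with f' strictly decreasing, so tbar is the zero of f'
   between t^+ and t^-. *)

Lemma Rpower_pos x r : 0 < Rpower x r.
Proof. apply exp_pos. Qed.

Lemma Rpower_plus1 x r : 0 < x -> Rpower x (r + 1) = x * Rpower x r.
Proof. intros hx. rewrite Rpower_plus, Rpower_1 by exact hx. ring. Qed.

Lemma Rpower_lt_base_iff x y e : 0 < e -> 0 < x -> 0 < y ->
  (Rpower x e < Rpower y e <-> x < y).
Proof.
intros he hx hy; split; intros H.
- destruct (Rlt_or_le x y) as [Hxy | Hyx]; [exact Hxy |].
  assert (Rpower y e <= Rpower x e) by (apply Rle_Rpower_l; lra). lra.
- apply Rlt_Rpower_l; lra.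
Qed.

Lemma Rpower_inv_root x r : 0 < x -> r <> 0 -> Rpower (Rpower x (/ r)) r = x.
Proof.
intros hx hr. rewrite Rpower_mult, Rinv_l by exact hr. exact (Rpower_1 x hx).
Qed.

Lemma Rlt_iff_diff_scaled k x y u v : 0 < k -> x - y = k * (u - v) -> (y < x <-> v < u).
Proof. intros hk E; split; intros H; nra. Qed.

Lemma continuity_pt_ex_derive (f : R -> R) x : ex_derive f x -> continuity_pt f x.
Proof. intros H. apply continuity_pt_filterlim. exact (ex_derive_continuous f x H). Qed.

Lemma exists_root_between (f : R -> R) a b : a < b ->
  (forall t, a <= t <= b -> continuity_pt f t) -> f a * f b < 0 ->
  exists c, a < c < b /\ f c = 0.
Proof.
intros hab hf hsign.
assert (hfa : f a <> 0) by (intros E; rewrite E in hsign; lra).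
assert (hroot : exists c, a <= c <= b /\ f c = 0).
{ destruct (Rdichotomy _ _ hfa) as [ha | ha].
  - destruct (IVT_interv f a b) as [c hc]; [exact hf | exact hab | exact ha | nra |].
    now exists c.
  - destruct (IVT_interv (fun t => - f t) a b) as [c hc];
      [intros t ht; now apply continuity_pt_opp, hf | exact hab | cbv beta; nra | cbv beta; nra |].
    exists c; lra. }
destruct hroot as [c [hc_ab hc]]. exists c; split; [| exact hc].
assert (c <> a) by (intros ->; contradiction).
assert (c <> b) by (intros ->; rewrite hc in hsign; lra).
lra.
Qed.

Section RootConfiguration.

Variables A B C q : R.
Hypotheses (hA : 0 < A) (hB : 0 < B) (hC : 0 < C) (hq : 1 < q).

Local Notation f := (f_fun A B C q).

Definition h_fun t := A * t ^ 2 - B - C * Rpower t (q + 1).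

Definition f_deriv t := A + B / t ^ 2 - C * q * Rpower t (q - 1).

Definition t_star := Rpower (2 * A / (C * (q + 1))) (/ (q - 1)).

Lemma Rpower_t_star : Rpower t_star (q - 1) = 2 * A / (C * (q + 1)).
Proof. apply Rpower_inv_root; [apply Rdiv_lt_0_compat |]; nra. Qed.

Lemma t_star_pos : 0 < t_star.
Proof. apply Rpower_pos. Qed.

Lemma h_fun_eq t : 0 < t -> h_fun t = t * f t.
Proof.
intros ht. unfold h_fun, f_fun. rewrite Rpower_plus1 by exact ht. field. lra.
Qed.

Lemma h_fun_root_iff t : 0 < t -> (h_fun t = 0 <-> f t = 0).
Proof.
intros ht. rewrite h_fun_eq by exact ht. split; intros H.
- apply (Rmult_eq_reg_l t); lra.
- rewrite H; ring.
Qed.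

Lemma h_fun_eq_pow t : 0 < t -> h_fun t = t ^ 2 * (A - C * Rpower t (q - 1)) - B.
Proof.
intros ht. unfold h_fun. replace (q + 1) with (q - 1 + 1 + 1) by ring.
rewrite !Rpower_plus1 by exact ht. ring.
Qed.

Lemma is_derive_f t : 0 < t -> is_derive f t (f_deriv t).
Proof.
intros ht. unfold f_fun, f_deriv, Rpower. auto_derive.
- repeat split; lra.
- replace (q * ln t) with ((q - 1) * ln t + ln t) by ring.
  rewrite exp_plus, exp_ln by exact ht. field. lra.
Qed.

Lemma is_derive_h t : 0 < t ->
  is_derive h_fun t (t * C * (q + 1) * (Rpower t_star (q - 1) - Rpower t (q - 1))).
Proof.
intros ht. rewrite Rpower_t_star. unfold h_fun, Rpower. auto_derive.
- repeat split; lra.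
- replace ((q + 1) * ln t) with ((q - 1) * ln t + ln t + ln t) by ring.
  rewrite !exp_plus, exp_ln by exact ht. field. lra.
Qed.

Lemma ex_derive_f_deriv t : 0 < t -> ex_derive f_deriv t.
Proof. intros ht. unfold f_deriv, Rpower. auto_derive. repeat split; nra. Qed.

Lemma g_fun_eq t : 0 < t -> g_fun A B C q t = t ^ 2 * f_deriv t.
Proof.
intros ht. unfold g_fun, f_deriv.
replace (q + 1) with (q - 1 + 1 + 1) by ring.
rewrite !Rpower_plus1 by exact ht. field. lra.
Qed.

Lemma Derive_f t : 0 < t -> Derive f t = f_deriv t.
Proof. intros ht. apply is_derive_unique, is_derive_f, ht. Qed.

Lemma f_deriv_decreasing s t : 0 < s < t -> f_deriv t < f_deriv s.
Proof.
intros hst. unfold f_deriv.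
assert (Rpower s (q - 1) < Rpower t (q - 1)) by (apply Rlt_Rpower_l; lra).
assert (B / t ^ 2 < B / s ^ 2).
{ apply Rmult_lt_compat_l, Rinv_lt_contravar; [exact hB | apply Rmult_lt_0_compat |]; nra. }
assert (C * q * Rpower s (q - 1) < C * q * Rpower t (q - 1)) by (apply Rmult_lt_compat_l; nra).
lra.
Qed.

Lemma f_deriv_at_root t : 0 < t -> f t = 0 ->
  f_deriv t = C * (q + 1) * (Rpower t_star (q - 1) - Rpower t (q - 1)).
Proof.
intros ht hf. rewrite Rpower_t_star.
assert (hB_eq : B = t ^ 2 * (A - C * Rpower t (q - 1))).
{ apply (h_fun_root_iff t ht) in hf. rewrite h_fun_eq_pow in hf by exact ht. lra. }
unfold f_deriv. rewrite hB_eq. field. lra.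
Qed.

Lemma f_deriv_root_pos t : 0 < t -> f t = 0 -> (0 < f_deriv t <-> t < t_star).
Proof.
intros ht hf. rewrite <- (Rpower_lt_base_iff t t_star (q - 1)) by (apply t_star_pos || lra).
apply (Rlt_iff_diff_scaled (C * (q + 1))); [nra |].
rewrite f_deriv_at_root by assumption. ring.
Qed.

Lemma f_deriv_root_neg t : 0 < t -> f t = 0 -> (f_deriv t < 0 <-> t_star < t).
Proof.
intros ht hf. rewrite <- (Rpower_lt_base_iff t_star t (q - 1)) by (apply t_star_pos || lra).
apply (Rlt_iff_diff_scaled (C * (q + 1))); [nra |].
rewrite f_deriv_at_root by assumption. ring.
Qed.

Lemma h_fun_lt_t_star s : 0 < s < t_star -> h_fun s < h_fun t_star.
Proof.
intros hs.
destruct (MVT_cor2 h_fun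
  (fun t => t * C * (q + 1) * (Rpower t_star (q - 1) - Rpower t (q - 1))) s t_star)
  as [c [hmvt hc]]; [lra | intros c hc; apply is_derive_Reals, is_derive_h; lra |].
assert (Rpower c (q - 1) < Rpower t_star (q - 1)) by (apply Rlt_Rpower_l; lra).
assert (0 < c * C * (q + 1)) by (apply Rmult_lt_0_compat; nra).
assert (0 < c * C * (q + 1) * (Rpower t_star (q - 1) - Rpower c (q - 1)) * (t_star - s))
  by (apply Rmult_lt_0_compat; [apply Rmult_lt_0_compat |]; lra).
lra.
Qed.

Lemma h_t_star_pos_iff : 0 < h_fun t_star <->
  Rpower (B * (q + 1)) ((q - 1) / 2) < 2 * A / (C * (q + 1)) * Rpower (A * (q - 1)) ((q - 1) / 2).
Proof.
pose proof t_star_pos as ht.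
assert (hmax : h_fun t_star = / (q + 1) * (t_star ^ 2 * (A * (q - 1)) - B * (q + 1))).
{ rewrite h_fun_eq_pow, Rpower_t_star by exact ht. field. lra. }
assert (hsq : Rpower (t_star ^ 2) ((q - 1) / 2) = 2 * A / (C * (q + 1))).
{ rewrite <- Rpower_pow, Rpower_mult, <- Rpower_t_star by exact ht.
  f_equal. simpl. field. }
rewrite <- hsq, Rpower_mult_distr, Rpower_lt_base_iff
  by (repeat apply Rmult_lt_0_compat; try apply pow_lt; lra).
apply Rlt_iff_diff_scaled with (/ (q + 1)); [apply Rinv_0_lt_compat; lra |].
rewrite hmax. ring.
Qed.

Lemma threshold_cond_iff : threshold_cond A B C q <->
  Rpower (B * (q + 1)) ((q - 1) / 2) < 2 * A / (C * (q + 1)) * Rpower (A * (q - 1)) ((q - 1) / 2).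
Proof.
set (e := (q - 1) / 2).
assert (hsucc : forall x, 0 < x -> Rpower x ((q + 1) / 2) = x * Rpower x e).
{ intros x hx. replace ((q + 1) / 2) with (e + 1) by (unfold e; field).
  apply Rpower_plus1, hx. }
unfold threshold_cond. fold e.
rewrite hsucc, hsucc, <- !Rpower_mult_distr by lra.
pose proof (Rpower_pos B e). pose proof (Rpower_pos (q + 1) e).
apply Rlt_iff_diff_scaled with (C / (2 * Rpower B e * Rpower (q + 1) e)).
- apply Rdiv_lt_0_compat; [lra |]. apply Rmult_lt_0_compat; nra.
- field. repeat split; lra.
Qed.

Lemma threshold_cond_iff_h_t_star_pos : threshold_cond A B C q <-> 0 < h_fun t_star.
Proof. now rewrite threshold_cond_iff, h_t_star_pos_iff. Qed.

Lemma h_fun_neg_near_0 t : 0 < t -> exists s, 0 < s < t /\ h_fun s < 0.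
Proof.
intros ht. set (d := B / (A + B)).
assert (hd : d * (A + B) = B) by (unfold d; field; lra).
assert (hd_pos : 0 < d) by (apply Rdiv_lt_0_compat; lra).
pose proof (Rmin_l (t / 2) d). pose proof (Rmin_r (t / 2) d).
set (s := Rmin (t / 2) d) in *.
assert (hs : 0 < s) by (apply Rmin_glb_lt; lra).
exists s. split; [lra |].
assert (hAs : s * A < B) by nra.
assert (hAs2 : s ^ 2 * A < B) by (assert (s < 1) by nra; nra).
rewrite h_fun_eq_pow by exact hs.
assert (0 < C * Rpower s (q - 1)) by (apply Rmult_lt_0_compat; [lra | apply Rpower_pos]).
nra.
Qed.

Lemma h_fun_neg_near_infty t : 0 < t -> exists T, t < T /\ h_fun T < 0.
Proof.
intros ht. set (r := Rpower (A / C) (/ (q - 1))).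
assert (hr : Rpower r (q - 1) = A / C).
{ apply Rpower_inv_root; [apply Rdiv_lt_0_compat |]; lra. }
assert (0 < r) by apply Rpower_pos.
exists (t + r). split; [lra |].
assert (hT : A / C < Rpower (t + r) (q - 1)) by (rewrite <- hr; apply Rlt_Rpower_l; lra).
assert (hAC : C * (A / C) = A) by (field; lra).
assert (A < C * Rpower (t + r) (q - 1)) by nra.
rewrite h_fun_eq_pow by lra.
assert (0 < (t + r) ^ 2) by (apply pow_lt; lra).
nra.
Qed.

Lemma f_two_roots : 0 < h_fun t_star ->
  exists tp tm, 0 < tp < t_star /\ t_star < tm /\ f tp = 0 /\ f tm = 0.
Proof.
intros hmax. pose proof t_star_pos as ht.
assert (hcont : forall t, 0 < t -> continuity_pt h_fun t).
{ intros t hpos. apply continuity_pt_ex_derive. eexists. apply is_derive_h, hpos. }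
destruct (h_fun_neg_near_0 t_star ht) as [s [hs hs_neg]].
destruct (h_fun_neg_near_infty t_star ht) as [T [hT hT_neg]].
destruct (exists_root_between h_fun s t_star) as [tp [htp htp0]];
  [lra | intros t ht'; apply hcont; lra | nra |].
destruct (exists_root_between h_fun t_star T) as [tm [htm htm0]];
  [lra | intros t ht'; apply hcont; lra | nra |].
exists tp, tm. rewrite <- !h_fun_root_iff by lra. repeat split; try lra; assumption.
Qed.

Lemma g_fun_sign_change tp tm : 0 < tp < tm -> 0 < f_deriv tp -> f_deriv tm < 0 ->
  exists tbar, tp < tbar < tm /\
    (forall t, 0 < t < tbar -> g_fun A B C q t > 0) /\
    (forall t, tbar < t -> g_fun A B C q t < 0).
Proof.
intros htpm hp hm.
destruct (exists_root_between f_deriv tp tm) as [tbar [htbar h0]];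
  [lra | intros t ht; apply continuity_pt_ex_derive, ex_derive_f_deriv; lra | nra |].
exists tbar. split; [exact htbar |]. split.
- intros t ht. rewrite g_fun_eq by lra.
  assert (f_deriv tbar < f_deriv t) by (apply f_deriv_decreasing; lra).
  apply Rmult_lt_0_compat; [apply pow_lt |]; lra.
- intros t ht. rewrite g_fun_eq by lra.
  assert (f_deriv t < f_deriv tbar) by (apply f_deriv_decreasing; lra).
  assert (0 < t ^ 2) by (apply pow_lt; lra). nra.
Qed.

End RootConfiguration.

Theorem proposition4p2 (A B C q : R)
  (hA : 0 < A) (hB : 0 < B) (hC : 0 < C) (hq : 1 < q) :
  (exists tbar tm tp : R,
      (0 < tp /\ tp < tbar /\ tbar < tm /\
       f_fun A B C q tp = 0 /\ f_fun A B C q tm = 0) /\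
      (Derive (f_fun A B C q) tp > 0 /\ Derive (f_fun A B C q) tm < 0) /\
      ((forall t, 0 < t < tbar -> g_fun A B C q t > 0) /\
       (forall t, tbar < t -> g_fun A B C q t < 0)))
  <-> threshold_cond A B C q.
Proof.
rewrite threshold_cond_iff_h_t_star_pos by assumption.
split.
- intros (tbar & tm & tp & (htp & _ & _ & ftp & _) & (dtp & _) & _).
  rewrite Derive_f in dtp by exact htp.
  assert (tp_lt : tp < t_star A C q) by now apply (f_deriv_root_pos A B C q).
  rewrite <- (proj2 (h_fun_root_iff A B C q tp htp) ftp).
  now apply h_fun_lt_t_star.
- intros hmax.
  destruct (f_two_roots A B C q hA hB hC hq hmax) as (tp & tm & htp & htm & ftp & ftm).
  assert (dtp : 0 < f_deriv A B C q tp) by (apply f_deriv_root_pos; auto; lra).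
  assert (dtm : f_deriv A B C q tm < 0) by (apply f_deriv_root_neg; auto; lra).
  destruct (g_fun_sign_change A B C q hB hC hq tp tm) as (tbar & htbar & hg_pos & hg_neg);
    [lra | exact dtp | exact dtm |].
  exists tbar, tm, tp. rewrite !Derive_f by lra.
  repeat split; assumption || lra.
Qed.
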